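(* Let $h$ be a snowflaking function and let $(X,d)$ be a metric space. If the metric space $(X,h\circ d)$ admits an isometric embedding into some finite-dimensional normed linear (Banach) space, then $X$ is finite.
   Context: Let $\mathbb R_{\geq}=[0,\infty)$. A function $h:\mathbb R_{\geq}\to\mathbb R_{\geq}$ is called a snowflaking function if: (S1) $h(0)=0$; (S2) $h$ is concave; (S3) $h(t)/t\to\infty$ as $t\to0^+$; (S4) $h(t)/t\to 0$ as $t\to\infty$. For such $h$ and a metric $d$ on $X$, $h\circ d$ is again a metric on $X$; $(X,h\circ d)$ is called the $h$-snowflake of $(X,d)$. *)

From Stdlib Require Import Reals Lra List.
Open Scope R_scope.

(* ---------- Snowflaking functions (h : [0,oo) -> [0,oo), modelled on R) ---------- *)
Definition snowflaking (h : R -> R) : Prop :=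
  (forall t, 0 <= t -> 0 <= h t) /\
  h 0 = 0 /\
  (forall x y l, 0 <= x -> 0 <= y -> 0 <= l <= 1 ->
     l * h x + (1 - l) * h y <= h (l * x + (1 - l) * y)) /\
  (forall M, exists delta, 0 < delta /\
     forall t, 0 < t < delta -> M < h t / t) /\
  (forall eps, 0 < eps -> exists T,
     forall t, T < t -> Rabs (h t / t) < eps).

Definition is_metric (X : Type) (d : X -> X -> R) : Prop :=
  (forall x y, 0 <= d x y) /\
  (forall x y, d x y = 0 <-> x = y) /\
  (forall x y, d x y = d y x) /\
  (forall x y z, d x z <= d x y + d y z).

Record NormedSpace := {
  ns_car :> Type;
  ns_zero : ns_car;
  ns_add : ns_car -> ns_car -> ns_car;
  ns_opp : ns_car -> ns_car;
  ns_scal : R -> ns_car -> ns_car;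
  ns_norm : ns_car -> R;
  ns_add_assoc : forall u v w, ns_add u (ns_add v w) = ns_add (ns_add u v) w;
  ns_add_comm : forall u v, ns_add u v = ns_add v u;
  ns_add_zero : forall u, ns_add u ns_zero = u;
  ns_add_opp : forall u, ns_add u (ns_opp u) = ns_zero;
  ns_scal_one : forall u, ns_scal 1 u = u;
  ns_scal_assoc : forall a b u, ns_scal a (ns_scal b u) = ns_scal (a * b) u;
  ns_scal_distr_l : forall a u v, ns_scal a (ns_add u v) = ns_add (ns_scal a u) (ns_scal a v);
  ns_scal_distr_r : forall a b u, ns_scal (a + b) u = ns_add (ns_scal a u) (ns_scal b u);
  ns_norm_nonneg : forall u, 0 <= ns_norm u;
  ns_norm_eq0 : forall u, ns_norm u = 0 -> u = ns_zero;
  ns_norm_scal : forall a u, ns_norm (ns_scal a u) = Rabs a * ns_norm u;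
  ns_norm_triangle : forall u v, ns_norm (ns_add u v) <= ns_norm u + ns_norm v
}.

Fixpoint lin_comb (V : NormedSpace) (n : nat) (c : nat -> R) (e : nat -> V) : V :=
  match n with
  | O => ns_zero V
  | S m => ns_add V (lin_comb V m c e) (ns_scal V (c m) (e m))
  end.

Definition finite_dimensional (V : NormedSpace) : Prop :=
  exists (n : nat) (e : nat -> V), forall v : V, exists c : nat -> R, v = lin_comb V n c e.

Definition isometric_embedding (X : Type) (dX : X -> X -> R) (V : NormedSpace) (f : X -> V) : Prop :=
  forall x y, ns_norm V (ns_add V (f x) (ns_opp V (f y))) = dX x y.

Definition finite_type (X : Type) : Prop := exists l : list X, forall x, In x l.

(* Compactness of bounded sets and of the unit sphere yields a sequence
   f(z_k) and a base point p such that all directions f(z_k) - p lie within 1/2 of each other;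
   then for r_i >= r_j (r = distance to p) we get |f z_i - f z_j| + r_j / 2 <= r_i, an almost
   collinear triple.  For three points a, b, c with h(d a b) + theta h(d b c) <= h(d a c),
   concavity gives theta h(t)/t <= h(s)/s where s = d a b, t = d b c.  If the image is
   unbounded, take f c = p, b fixed and a far out: s -> oo forces h(s)/s -> 0 while h(t)/t
   stays fixed.  If it is bounded, p is a limit point; take a fixed, b close to p and c much
   closer: t -> 0 forces h(t)/t -> oo while h(s)/s stays bounded. *)

From Stdlib Require Import Reals Lra Lia List Classical ClassicalEpsilon Rtopology.
Open Scope R_scope.

Definition strict_incr (phi : nat -> nat) : Prop := forall k, (phi k < phi (S k))%nat.

Lemma strict_incr_ge phi : strict_incr phi -> forall k, (k <= phi k)%nat.
Proof. intros H k; induction k as [|k IH]; [lia|]; specialize (H k); lia. Qed.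

Lemma strict_incr_lt phi : strict_incr phi -> forall k k', (k < k')%nat -> (phi k < phi k')%nat.
Proof. intros H k k' Hk; induction Hk as [|m _ IH]; [apply H|]; specialize (H m); lia. Qed.

Lemma strict_incr_comp phi psi :
  strict_incr phi -> strict_incr psi -> strict_incr (fun k => phi (psi k)).
Proof. intros H1 H2 k; apply strict_incr_lt; auto. Qed.

Lemma strict_incr_shift phi N : strict_incr phi -> strict_incr (fun k => phi (N + k)%nat).
Proof. intros H k; rewrite Nat.add_succ_r; apply H. Qed.

Lemma strict_incr_inj phi : strict_incr phi -> forall k k', phi k = phi k' -> k = k'.
Proof.
  intros H k k' E; destruct (Nat.lt_trichotomy k k') as [Hl|[|Hl]]; auto;
    pose proof (strict_incr_lt phi H _ _ Hl); lia.
Qed.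

Lemma injective_seq_avoids {T : Type} (z : nat -> T) (p : T) :
  (forall i j, z i = z j -> i = j) -> exists N, forall k, (N <= k)%nat -> z k <> p.
Proof.
  intro Hz; destruct (classic (exists k0, z k0 = p)) as [[k0 Hk0]|Hno].
  - exists (S k0); intros k Hk E; rewrite <- Hk0 in E; apply Hz in E; lia.
  - exists O; intros k _ E; eauto.
Qed.

Fixpoint enum_fresh {T : Type} (g : list T -> T) (n : nat) : list T :=
  match n with O => nil | S m => g (enum_fresh g m) :: enum_fresh g m end.

Lemma infinite_injective_seq (T : Type) :
  ~ finite_type T -> exists x : nat -> T, forall m m', x m = x m' -> m = m'.
Proof.
  intro Hinf.
  assert (Hfresh : forall l : list T, exists z, ~ In z l).
  { intro l; apply NNPP; intro Hno; apply Hinf; exists l; intro z.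
    apply NNPP; intro Hz; apply Hno; eauto. }
  destruct (choice _ Hfresh) as [g Hg].
  exists (fun m => g (enum_fresh g m)).
  assert (Hin : forall m m', (m < m')%nat -> In (g (enum_fresh g m)) (enum_fresh g m')).
  { intros m m' Hmm'; induction Hmm'; simpl; auto. }
  intros m m' E; destruct (Nat.lt_trichotomy m m') as [Hlt|[|Hlt]]; auto; exfalso.
  - apply (Hg (enum_fresh g m')); rewrite <- E; auto.
  - apply (Hg (enum_fresh g m)); rewrite E; auto.
Qed.

Lemma inv_INR_small (eps : R) : 0 < eps -> exists N, / INR (S N) < eps.
Proof.
  intro He; destruct (INR_archimed eps 1 He) as [N HN]; exists N.
  rewrite S_INR; pose proof (pos_INR N).
  apply (Rmult_lt_reg_r (INR N + 1)); [lra|]; rewrite Rinv_l by lra; nra.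
Qed.

Lemma inv_INR_le (k N : nat) : (N <= k)%nat -> / INR (S k) <= / INR (S N).
Proof. intro H; apply Rinv_le_contravar; [apply lt_0_INR; lia | apply le_INR; lia]. Qed.

Fixpoint diag_seq (g : nat -> nat -> nat) (k : nat) : nat :=
  match k with O => g O O | S k' => g (S (diag_seq g k')) k end.

Lemma subseq_of_cluster {T : Type} (dist : T -> R) (a : nat -> T) :
  (forall eps, 0 < eps -> forall N, exists m, (N <= m)%nat /\ dist (a m) < eps) ->
  exists phi, strict_incr phi /\
    forall eps, 0 < eps -> exists N, forall k, (N <= k)%nat -> dist (a (phi k)) < eps.
Proof.
  intro H.
  assert (H' : forall z : nat * nat, exists m, (fst z <= m)%nat /\ dist (a m) < / INR (S (snd z))).
  { intros [N k]; apply H, Rinv_0_lt_compat, lt_0_INR; lia. }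
  apply choice in H' as [g Hg].
  (* the k-th index lies beyond the previous one and within 1/(k+1) of the cluster *)
  exists (diag_seq (fun N k => g (N, k))); split.
  - intro k; simpl; specialize (Hg (S (diag_seq (fun N k => g (N, k)) k), S k)); simpl in Hg; lia.
  - intros eps He; destruct (inv_INR_small eps He) as [N HN]; exists N; intros k Hk.
    assert (dist (a (diag_seq (fun N k => g (N, k)) k)) < / INR (S k)).
    { destruct k; simpl; [apply (Hg (0, 0)%nat) | apply (Hg (_, S k))]. }
    pose proof (inv_INR_le k N Hk); lra.
Qed.

Definition Rconv (a : nat -> R) (l : R) : Prop :=
  forall eps, 0 < eps -> exists N, forall k, (N <= k)%nat -> Rabs (a k - l) < eps.

Lemma Rconv_subseq a l phi : Rconv a l -> strict_incr phi -> Rconv (fun k => a (phi k)) l.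
Proof.
  intros H Hp eps He; destruct (H eps He) as [N HN]; exists N; intros k Hk.
  apply HN; pose proof (strict_incr_ge phi Hp k); lia.
Qed.

Lemma bounded_Rseq_conv_subseq (a : nat -> R) (B : R) :
  (forall m, Rabs (a m) <= B) -> exists phi l, strict_incr phi /\ Rconv (fun k => a (phi k)) l.
Proof.
  intro HB.
  destruct (Bolzano_Weierstrass a (fun c => -B <= c <= B) (compact_P3 (-B) B)) as [l Hl].
  { intro m; specialize (HB m); revert HB; unfold Rabs; destruct Rcase_abs; lra. }
  destruct (subseq_of_cluster (fun c => Rabs (c - l)) a) as [phi [H1 H2]].
  { intros eps He N; destruct (Hl (disc l (mkposreal eps He)) N) as [m Hm].
    - exists (mkposreal eps He); intros c Hc; exact Hc.
    - exists m; exact Hm. }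
  exists phi, l; split; auto.
Qed.

Arguments ns_zero {n}.
Arguments ns_add {n}.
Arguments ns_opp {n}.
Arguments ns_scal {n}.
Arguments ns_norm {n}.

Section NormedSpaceFacts.

Context {V : NormedSpace}.
Implicit Types u v w p q : V.

Definition vsub u v : V := ns_add u (ns_opp v).
Definition vdist u v : R := ns_norm (vsub u v).

Lemma add0v u : ns_add ns_zero u = u.
Proof. rewrite ns_add_comm; apply ns_add_zero. Qed.

Lemma addv_cancel u v w : ns_add u v = ns_add u w -> v = w.
Proof.
  intro H.
  assert (H2 : ns_add (ns_opp u) (ns_add u v) = ns_add (ns_opp u) (ns_add u w)) by now rewrite H.
  rewrite !ns_add_assoc, (ns_add_comm _ (ns_opp u) u), ns_add_opp, !add0v in H2; exact H2.
Qed.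

Lemma scale0v u : ns_scal 0 u = ns_zero.
Proof.
  apply (addv_cancel (ns_scal 0 u)); rewrite ns_add_zero, <- ns_scal_distr_r.
  now rewrite Rplus_0_r.
Qed.

Lemma scalev0 a : ns_scal a (@ns_zero V) = ns_zero.
Proof. rewrite <- (scale0v ns_zero), ns_scal_assoc; now rewrite Rmult_0_r. Qed.

Lemma oppv_scale u : ns_opp u = ns_scal (-1) u.
Proof.
  apply (addv_cancel u); rewrite ns_add_opp.
  rewrite <- (ns_scal_one _ u) at 1; rewrite <- ns_scal_distr_r.
  replace (1 + -1) with 0 by ring; now rewrite scale0v.
Qed.

Lemma norm_zero : ns_norm (@ns_zero V) = 0.
Proof. rewrite <- (scale0v ns_zero), ns_norm_scal, Rabs_R0; ring. Qed.

Lemma norm_opp u : ns_norm (ns_opp u) = ns_norm u.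
Proof. rewrite oppv_scale, ns_norm_scal, Rabs_left by lra; ring. Qed.

Lemma oppv_add u v : ns_opp (ns_add u v) = ns_add (ns_opp u) (ns_opp v).
Proof. rewrite !oppv_scale; apply ns_scal_distr_l. Qed.

Lemma oppv_opp u : ns_opp (ns_opp u) = u.
Proof.
  rewrite !oppv_scale, ns_scal_assoc; replace (-1 * -1) with 1 by ring; apply ns_scal_one.
Qed.

Lemma addv_ACA u v w p : ns_add (ns_add u v) (ns_add w p) = ns_add (ns_add u w) (ns_add v p).
Proof.
  rewrite !ns_add_assoc; f_equal; rewrite <- !ns_add_assoc; f_equal; apply ns_add_comm.
Qed.

Lemma vsub_add u v w p : vsub (ns_add u v) (ns_add w p) = ns_add (vsub u w) (vsub v p).
Proof. unfold vsub; rewrite oppv_add; apply addv_ACA. Qed.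

Lemma vsub_addK u v : ns_add (vsub u v) v = u.
Proof.
  unfold vsub; rewrite <- ns_add_assoc, (ns_add_comm _ (ns_opp v) v), ns_add_opp.
  apply ns_add_zero.
Qed.

Lemma vsub_translate u v p : vsub (vsub u p) (vsub v p) = vsub u v.
Proof.
  unfold vsub; rewrite oppv_add, oppv_opp, addv_ACA.
  rewrite (ns_add_comm _ (ns_opp p) p), ns_add_opp, ns_add_zero; reflexivity.
Qed.

Lemma vsub_scalel a b u : vsub (ns_scal a u) (ns_scal b u) = ns_scal (a - b) u.
Proof. unfold vsub; rewrite oppv_scale, ns_scal_assoc, <- ns_scal_distr_r; f_equal; ring. Qed.

Lemma vsub_scaler a u v : vsub (ns_scal a u) (ns_scal a v) = ns_scal a (vsub u v).
Proof.
  unfold vsub; rewrite ns_scal_distr_l, !oppv_scale, !ns_scal_assoc; do 2 f_equal; ring.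
Qed.

Lemma vdist_diag u : vdist u u = 0.
Proof. unfold vdist, vsub; rewrite ns_add_opp; apply norm_zero. Qed.

Lemma vdist_sym u v : vdist u v = vdist v u.
Proof.
  unfold vdist; rewrite <- norm_opp; f_equal.
  unfold vsub; rewrite oppv_add, oppv_opp; apply ns_add_comm.
Qed.

Lemma vdist_triangle u v w : vdist u w <= vdist u v + vdist v w.
Proof.
  unfold vdist; replace (vsub u w) with (ns_add (vsub u v) (vsub v w)).
  - apply ns_norm_triangle.
  - unfold vsub; rewrite ns_add_assoc, <- (ns_add_assoc _ u), (ns_add_comm _ (ns_opp v) v).
    now rewrite ns_add_opp, ns_add_zero.
Qed.

Lemma vdist_ge_diff u v p : vdist u p - vdist v p <= vdist u v.
Proof. pose proof (vdist_triangle u v p); lra. Qed.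

Lemma vdist_eq0 u v : vdist u v = 0 -> u = v.
Proof. intro H; apply ns_norm_eq0 in H; rewrite <- (vsub_addK u v), H; apply add0v. Qed.

Lemma vdist_gt0 u v : u <> v -> 0 < vdist u v.
Proof.
  intro Hne; destruct (Rle_lt_or_eq_dec _ _ (ns_norm_nonneg _ (vsub u v))) as [|E]; auto.
  exfalso; apply Hne, vdist_eq0; symmetry; exact E.
Qed.

Lemma vdist_translate u v p : vdist (vsub u p) (vsub v p) = vdist u v.
Proof. unfold vdist; now rewrite vsub_translate. Qed.

Lemma add_scaleK u a v : ns_add (ns_add u (ns_scal a v)) (ns_scal (- a) v) = u.
Proof.
  rewrite <- ns_add_assoc, <- ns_scal_distr_r, Rplus_opp_r, scale0v; apply ns_add_zero.
Qed.

Lemma norm_le_vdist u v : ns_norm u <= vdist u v + ns_norm v.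
Proof. rewrite <- (vsub_addK u v) at 1; apply ns_norm_triangle. Qed.

Definition unit_dir w : V := ns_scal (/ ns_norm w) w.

Lemma norm_unit_dir w : ns_norm w <> 0 -> ns_norm (unit_dir w) = 1.
Proof.
  intro E; unfold unit_dir; rewrite ns_norm_scal; pose proof (ns_norm_nonneg _ w).
  rewrite Rabs_right by (left; apply Rinv_0_lt_compat; lra); apply Rinv_l; auto.
Qed.

Lemma norm_unit_dir_le1 w : ns_norm (unit_dir w) <= 1.
Proof.
  destruct (Req_dec (ns_norm w) 0) as [E|E].
  - unfold unit_dir; rewrite ns_norm_scal, E, Rinv_0, Rabs_R0; lra.
  - rewrite norm_unit_dir; lra.
Qed.

Lemma scale_unit_dir w : ns_scal (ns_norm w) (unit_dir w) = w.
Proof.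
  destruct (Req_dec (ns_norm w) 0) as [E|E].
  - rewrite E, scale0v; symmetry; now apply ns_norm_eq0.
  - unfold unit_dir; rewrite ns_scal_assoc, Rinv_r by auto; apply ns_scal_one.
Qed.

Lemma vdist_radial ra rb ua ub : ns_norm ua = 1 -> 0 <= rb <= ra ->
  vdist (ns_scal ra ua) (ns_scal rb ub) <= (ra - rb) + rb * vdist ua ub.
Proof.
  intros Hua Hr; pose proof (vdist_triangle (ns_scal ra ua) (ns_scal rb ua) (ns_scal rb ub)) as H.
  unfold vdist in H |- *; rewrite vsub_scalel, vsub_scaler, !ns_norm_scal, Hua in H.
  rewrite (Rabs_right (ra - rb)), (Rabs_right rb) in H by lra; lra.
Qed.

Definition aligned p (z : nat -> V) : Prop :=
  forall i j, vdist (z j) p <= vdist (z i) p ->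
    vdist (z i) (z j) + vdist (z j) p / 2 <= vdist (z i) p.

Lemma aligned_of_close_dirs u w p :
  vdist (unit_dir (vsub u p)) (unit_dir (vsub w p)) <= 1 / 2 -> vdist w p <= vdist u p ->
  vdist u w + vdist w p / 2 <= vdist u p.
Proof.
  intros Hdir Hle; pose proof (ns_norm_nonneg _ (vsub w p)) as Hw.
  destruct (Req_dec (vdist u p) 0) as [E|E].
  - pose proof (vdist_triangle u p w); rewrite (vdist_sym p w) in H; unfold vdist in *; lra.
  - assert (Hrad := vdist_radial (ns_norm (vsub u p)) (ns_norm (vsub w p))
                      (unit_dir (vsub u p)) (unit_dir (vsub w p))
                      (norm_unit_dir _ E) (conj Hw Hle)).
    rewrite !scale_unit_dir, vdist_translate in Hrad.
    assert (ns_norm (vsub w p) * vdist (unit_dir (vsub u p)) (unit_dir (vsub w p))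
            <= ns_norm (vsub w p) * (1 / 2)) by (apply Rmult_le_compat_l; lra).
    unfold vdist in *; lra.
Qed.

Definition conv (s : nat -> V) q : Prop :=
  forall eps, 0 < eps -> exists N, forall k, (N <= k)%nat -> vdist (s k) q < eps.

Lemma conv_subseq s q phi : conv s q -> strict_incr phi -> conv (fun k => s (phi k)) q.
Proof.
  intros H Hp eps He; destruct (H eps He) as [N HN]; exists N; intros k Hk.
  apply HN; pose proof (strict_incr_ge phi Hp k); lia.
Qed.

Lemma conv_unique s q q' : conv s q -> conv s q' -> q = q'.
Proof.
  intros H H'; apply vdist_eq0; apply NNPP; intro Hne.
  assert (Hpos : 0 < vdist q q')
    by (pose proof (ns_norm_nonneg _ (vsub q q')); unfold vdist in *; lra).
  assert (Hhalf : 0 < vdist q q' / 2) by lra.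
  destruct (H _ Hhalf) as [N HN], (H' _ Hhalf) as [N' HN'].
  specialize (HN (Nat.max N N') ltac:(lia)); specialize (HN' (Nat.max N N') ltac:(lia)).
  pose proof (vdist_triangle q (s (Nat.max N N')) q'); rewrite vdist_sym in HN; lra.
Qed.

Lemma conv_add s t q r : conv s q -> conv t r -> conv (fun k => ns_add (s k) (t k)) (ns_add q r).
Proof.
  intros Hs Ht eps He.
  destruct (Hs (eps / 2) ltac:(lra)) as [N HN], (Ht (eps / 2) ltac:(lra)) as [N' HN'].
  exists (Nat.max N N'); intros k Hk; unfold vdist; rewrite vsub_add.
  eapply Rle_lt_trans; [apply ns_norm_triangle|].
  specialize (HN k ltac:(lia)); specialize (HN' k ltac:(lia)); unfold vdist in *; lra.
Qed.

Lemma conv_scale (a : nat -> R) l v : Rconv a l -> conv (fun k => ns_scal (a k) v) (ns_scal l v).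
Proof.
  intros Ha eps He; pose proof (ns_norm_nonneg _ v) as Hv.
  destruct (Ha (eps / (ns_norm v + 1))) as [N HN]; [apply Rdiv_lt_0_compat; lra|].
  exists N; intros k Hk; unfold vdist; rewrite vsub_scalel, ns_norm_scal.
  specialize (HN k Hk).
  apply (Rmult_lt_compat_r (ns_norm v + 1)) in HN; [|lra].
  replace (eps / (ns_norm v + 1) * (ns_norm v + 1)) with eps in HN by (field; lra).
  pose proof (Rabs_pos (a k - l)); nra.
Qed.

End NormedSpaceFacts.

Section FiniteDimensional.

Context {V : NormedSpace}.

Definition span (n : nat) (e : nat -> V) (v : V) : Prop := exists c, v = lin_comb V n c e.

Definition boundedly_compact (P : V -> Prop) : Prop :=
  forall v : nat -> V, (forall m, P (v m)) -> (exists B, forall m, ns_norm (v m) <= B) ->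
  exists phi q, strict_incr phi /\ P q /\ conv (fun k => v (phi k)) q.

Lemma lin_comb_ext n c c' e : (forall i, (i < n)%nat -> c i = c' i) ->
  lin_comb V n c e = lin_comb V n c' e.
Proof.
  induction n as [|n IH]; intro H; simpl; auto.
  rewrite IH, (H n) by (lia || (intros; apply H; lia)); reflexivity.
Qed.

Lemma lin_comb_add n c c' e :
  ns_add (lin_comb V n c e) (lin_comb V n c' e) = lin_comb V n (fun i => c i + c' i) e.
Proof. induction n; simpl; [apply ns_add_zero|]; now rewrite addv_ACA, IHn, ns_scal_distr_r. Qed.

Lemma lin_comb_scale n a c e : ns_scal a (lin_comb V n c e) = lin_comb V n (fun i => a * c i) e.
Proof. induction n; simpl; [apply scalev0|]; now rewrite ns_scal_distr_l, IHn, ns_scal_assoc. Qed.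

Lemma span_add n e u v : span n e u -> span n e v -> span n e (ns_add u v).
Proof. intros [c ->] [c' ->]; eexists; apply lin_comb_add. Qed.

Lemma span_scale n e a u : span n e u -> span n e (ns_scal a u).
Proof. intros [c ->]; eexists; apply lin_comb_scale. Qed.

Lemma span_S_add n e u a : span n e u -> span (S n) e (ns_add u (ns_scal a (e n))).
Proof.
  intros [c ->]; exists (fun i => if Nat.eqb i n then a else c i); simpl.
  rewrite Nat.eqb_refl; f_equal; apply lin_comb_ext; intros i Hi.
  destruct (Nat.eqb_spec i n); [lia|auto].
Qed.

Lemma span_S_split n e v : span (S n) e v ->
  exists u a, span n e u /\ v = ns_add u (ns_scal a (e n)).
Proof. intros [c ->]; exists (lin_comb V n c e), (c n); split; [exists c|]; reflexivity. Qed.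

Lemma span_S_of_span n e v : span n e v -> span (S n) e v.
Proof. intro Hv; rewrite <- (ns_add_zero _ v), <- (scale0v (e n)); now apply span_S_add. Qed.

Lemma boundedly_compact_closed (P : V -> Prop) (x : V) : boundedly_compact P ->
  (forall eps, 0 < eps -> exists u, P u /\ vdist u x < eps) -> P x.
Proof.
  intros HP Hadh.
  assert (Hg : forall k, exists u, P u /\ vdist u x < / INR (S k))
    by (intro k; apply Hadh, Rinv_0_lt_compat, lt_0_INR; lia).
  destruct (choice _ Hg) as [g Hgk].
  assert (Hconv : conv g x).
  { intros eps He; destruct (inv_INR_small eps He) as [N HN]; exists N; intros k Hk.
    pose proof (inv_INR_le k N Hk); destruct (Hgk k); lra. }
  destruct (HP g) as [psi [q [Hpsi [Hq Hgq]]]]; [intro k; apply Hgk|..].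
  - exists (ns_norm x + 1); intro k; destruct (Hgk k) as [_ Hk].
    pose proof (norm_le_vdist (g k) x); pose proof (inv_INR_le k 0 ltac:(lia)).
    simpl in *; rewrite Rinv_1 in *; lra.
  - now rewrite (conv_unique _ _ _ (conv_subseq _ _ _ Hconv Hpsi) Hgq).
Qed.

Lemma coef_bound_of_separated n e (x : V) (dd : R) :
  (forall u, span n e u -> dd <= vdist u x) ->
  forall w a, span n e w -> Rabs a * dd <= ns_norm (ns_add w (ns_scal a x)).
Proof.
  intros Hsep w a Hw; destruct (Req_dec a 0) as [->|Ha].
  - rewrite Rabs_R0, Rmult_0_l; apply ns_norm_nonneg.
  - replace (ns_add w (ns_scal a x)) with (ns_scal a (vsub x (ns_scal (- / a) w))).
    + rewrite ns_norm_scal; fold (vdist x (ns_scal (- / a) w)); rewrite vdist_sym.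
      apply Rmult_le_compat_l; [apply Rabs_pos|].
      now apply Hsep, span_scale.
    + unfold vsub; rewrite ns_scal_distr_l, oppv_scale, !ns_scal_assoc.
      replace (a * -1 * - / a) with 1 by (field; auto); now rewrite ns_scal_one, ns_add_comm.
Qed.

Lemma span_S_boundedly_compact n e (dd : R) : boundedly_compact (span n e) -> 0 < dd ->
  (forall u, span n e u -> dd <= vdist u (e n)) -> boundedly_compact (span (S n) e).
Proof.
  intros IH Hdd Hsep v Hv [B HB].
  destruct (choice _ (fun m => span_S_split n e (v m) (Hv m))) as [w Hw'].
  destruct (choice _ Hw') as [a Hwa].
  assert (Ha : forall m, Rabs (a m) <= B / dd).
  { intro m; destruct (Hwa m) as [Hwm Hvm].
    pose proof (coef_bound_of_separated n e (e n) dd Hsep (w m) (a m) Hwm); rewrite <- Hvm in *.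
    apply (Rmult_le_reg_r dd); [lra|]; unfold Rdiv; rewrite Rmult_assoc, Rinv_l by lra.
    pose proof (HB m); lra. }
  destruct (bounded_Rseq_conv_subseq a (B / dd) Ha) as [phi [l [Hphi Hal]]].
  destruct (IH (fun k => w (phi k))) as [psi [q [Hpsi [Hq Hconv]]]].
  { intro k; apply Hwa. }
  { exists (B + B / dd * ns_norm (e n)); intro k; destruct (Hwa (phi k)) as [_ Hvk].
    rewrite <- (add_scaleK (w (phi k)) (a (phi k)) (e n)), <- Hvk.
    eapply Rle_trans; [apply ns_norm_triangle|]; rewrite ns_norm_scal, Rabs_Ropp.
    apply Rplus_le_compat; [apply HB|].
    apply Rmult_le_compat_r; [apply ns_norm_nonneg|apply Ha]. }
  exists (fun k => phi (psi k)), (ns_add q (ns_scal l (e n))); split; [|split].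
  - now apply strict_incr_comp.
  - now apply span_S_add.
  - assert (Hsum : forall k,
              v (phi (psi k)) = ns_add (w (phi (psi k))) (ns_scal (a (phi (psi k))) (e n)))
      by (intro k; apply Hwa).
    intros eps He; destruct (conv_add _ _ _ _ Hconv
      (conv_scale _ _ (e n) (Rconv_subseq _ _ _ Hal Hpsi)) eps He) as [N HN].
    exists N; intros k Hk; rewrite Hsum; apply HN, Hk.
Qed.

Theorem span_boundedly_compact n e : boundedly_compact (span n e).
Proof.
  induction n as [|n IH].
  - intros v Hv _; exists (fun k => k), ns_zero.
    split; [intro k; lia|split; [exists (fun _ => 0); reflexivity|]].
    intros eps He; exists O; intros k _; destruct (Hv k) as [c ->]; rewrite vdist_diag; exact He.
  - destruct (classic (forall eps, 0 < eps -> exists u, span n e u /\ vdist u (e n) < eps))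
      as [Hadh|Hsep].
    + (* e n lies in span n e, so adding it to the spanning family changes nothing *)
      pose proof (boundedly_compact_closed _ (e n) IH Hadh) as Hen.
      intros v Hv Hb; destruct (IH v) as [phi [q [Hphi [Hq Hconv]]]]; auto.
      * intro m; destruct (span_S_split n e (v m) (Hv m)) as [u [a [Hu ->]]].
        now apply span_add, span_scale.
      * exists phi, q; auto using span_S_of_span.
    + apply not_all_ex_not in Hsep as [dd Hdd]; apply imply_to_and in Hdd as [Hdd Hno].
      apply (span_S_boundedly_compact n e dd IH Hdd); intros u Hu.
      apply Rnot_lt_le; intro Hlt; apply Hno; eauto.
Qed.

End FiniteDimensional.


Lemma exists_aligned_subseq {V : NormedSpace} n (e : nat -> V) :
  (forall v, span n e v) -> forall (z : nat -> V) p,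
  exists phi, strict_incr phi /\ aligned p (fun k => z (phi k)).
Proof.
  intros Hspan z p.
  set (u k := unit_dir (vsub (z k) p)).
  destruct (span_boundedly_compact n e u) as [phi [ulim [Hphi [_ Hconv]]]].
  { intro; apply Hspan. }
  { exists 1; intro; apply norm_unit_dir_le1. }
  destruct (Hconv (1 / 4) ltac:(lra)) as [N HN].
  exists (fun k => phi (N + k)%nat); split; [now apply strict_incr_shift|].
  intros i j; apply aligned_of_close_dirs.
  pose proof (vdist_triangle (u (phi (N + i)%nat)) ulim (u (phi (N + j)%nat))).
  pose proof (HN (N + i)%nat ltac:(lia)); pose proof (HN (N + j)%nat ltac:(lia)).
  rewrite (vdist_sym ulim) in *; fold (u (phi (N + i)%nat)) (u (phi (N + j)%nat)); lra.
Qed.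

Section SnowflakingFunctions.

Variable h : R -> R.
Hypothesis Hh : snowflaking h.

Lemma snowflaking_nonneg t : 0 <= t -> 0 <= h t.
Proof. apply Hh. Qed.

Lemma snowflaking_chord a b c : 0 <= a -> a < b -> b < c ->
  (c - b) * h a + (b - a) * h c <= (c - a) * h b.
Proof.
  destruct Hh as [_ [_ [Hconc _]]]; intros Ha Hab Hbc.
  set (l := (c - b) / (c - a)).
  assert (Hl : 0 <= l <= 1).
  { unfold l; split; [apply Rmult_le_pos; [lra | left; apply Rinv_0_lt_compat; lra]|].
    apply (Rmult_le_reg_r (c - a)); [lra|]; unfold Rdiv; rewrite Rmult_assoc, Rinv_l by lra; lra. }
  pose proof (Hconc a c l Ha ltac:(lra) Hl) as H.
  replace (l * a + (1 - l) * c) with b in H by (unfold l; field; lra).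
  apply (Rmult_le_compat_l (c - a)) in H; [|lra].
  replace ((c - a) * (l * h a + (1 - l) * h c)) with ((c - b) * h a + (b - a) * h c) in H
    by (unfold l; field; lra).
  exact H.
Qed.

(* A decrease of h from s to t would, by concavity, force h negative far beyond t. *)
Lemma snowflaking_mono s t : 0 <= s -> s <= t -> h s <= h t.
Proof.
  intros Hs Hst; apply Rnot_lt_le; intro Hlt.
  destruct (Req_dec s t) as [->|Hne]; [lra|].
  set (T := t + (t - s) * h t / (h s - h t) + 1).
  assert (Hht := snowflaking_nonneg t ltac:(lra)).
  assert (HT : t < T).
  { assert (0 <= (t - s) * h t / (h s - h t)).
    { apply Rmult_le_pos; [apply Rmult_le_pos; lra | left; apply Rinv_0_lt_compat; lra]. }
    unfold T; lra. }
  pose proof (snowflaking_chord s t T Hs ltac:(lra) HT) as Hq.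
  pose proof (snowflaking_nonneg T ltac:(lra)) as HhT.
  assert (H3 : (T - t) * (h s - h t) = (t - s) * h t + (h s - h t)) by (unfold T; field; lra).
  nra.
Qed.

Lemma snowflaking_lt_inv s t : 0 <= t -> h s < h t -> s < t.
Proof.
  intros Ht Hlt; apply Rnot_le_lt; intro Hts; pose proof (snowflaking_mono t s Ht Hts); lra.
Qed.

Lemma snowflaking_ratio s t : 0 < s -> s <= t -> s * h t <= t * h s.
Proof.
  intros Hs Hst; destruct (Req_dec s t) as [->|Hne]; [lra|].
  pose proof (snowflaking_chord 0 s t ltac:(lra) Hs ltac:(lra)) as H.
  destruct Hh as [_ [H0 _]]; rewrite H0 in H; lra.
Qed.

Lemma snowflaking_pos t : 0 < t -> 0 < h t.
Proof.
  intro Ht; destruct Hh as [_ [_ [_ [Hsmall _]]]].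
  destruct (Hsmall 0) as [dl [Hdl Hd]].
  set (t' := Rmin t (dl / 2)).
  assert (Ht' : 0 < t' <= t /\ t' < dl) by (unfold t', Rmin; destruct Rle_dec; lra).
  specialize (Hd t' ltac:(lra)).
  assert (0 < h t').
  { apply (Rmult_lt_reg_r (/ t')); [apply Rinv_0_lt_compat; lra|]; unfold Rdiv in Hd; lra. }
  pose proof (snowflaking_mono t' t ltac:(lra) ltac:(lra)); lra.
Qed.

Lemma snowflaking_steep_near0 M : exists eta, 0 < eta /\
  forall t, 0 < t -> h t < eta -> M * t < h t.
Proof.
  destruct Hh as [_ [_ [_ [Hsmall _]]]]; destruct (Hsmall M) as [dl [Hdl Hd]].
  exists (h (dl / 2)); split; [apply snowflaking_pos; lra|]; intros t Ht Hlt.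
  pose proof (snowflaking_lt_inv t (dl / 2) ltac:(lra) Hlt).
  specialize (Hd t ltac:(lra)); unfold Rdiv in Hd.
  apply (Rmult_lt_compat_r t) in Hd; [|lra]; rewrite Rmult_assoc, Rinv_l in Hd; lra.
Qed.

Lemma snowflaking_flat_at_infty eps : 0 < eps -> exists eta, 0 <= eta /\
  forall t, 0 < t -> eta < h t -> h t < eps * t.
Proof.
  intro He; destruct Hh as [_ [_ [_ [_ Hlarge]]]]; destruct (Hlarge eps He) as [T HT].
  exists (h (Rmax T 0)); split; [apply snowflaking_nonneg, Rmax_r|]; intros t Ht Hlt.
  pose proof (snowflaking_lt_inv (Rmax T 0) t ltac:(lra) Hlt).
  specialize (HT t ltac:(pose proof (Rmax_l T 0); lra)).
  apply Rabs_def2 in HT as [HT _]; unfold Rdiv in HT.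
  apply (Rmult_lt_compat_r t) in HT; [|lra]; rewrite Rmult_assoc, Rinv_l in HT; lra.
Qed.

(* h(d a c) <= h(d a b + d b c) <= h(d a b) + d b c * h(d a b) / d a b, the last step because
   h(t)/t is nonincreasing. *)
Lemma snowflake_excess_bound (X : Type) (d : X -> X -> R) (a b c : X) (theta : R) :
  is_metric X d -> 0 < d a b -> h (d a b) + theta * h (d b c) <= h (d a c) ->
  theta * h (d b c) * d a b <= d b c * h (d a b).
Proof.
  intros [Hd0 [_ [_ Htri]]] Hab Hexc.
  pose proof (snowflaking_mono _ _ (Hd0 a c) (Htri a b c)).
  pose proof (snowflaking_ratio (d a b) (d a b + d b c) Hab ltac:(pose proof (Hd0 b c); lra)).
  nra.
Qed.

End SnowflakingFunctions.

Section SnowflakeEmbedding.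

Variables (h : R -> R) (X : Type) (d : X -> X -> R) (V : NormedSpace) (f : X -> V).
Variables (n : nat) (e : nat -> V).
Hypothesis Hh : snowflaking h.
Hypothesis Hd : is_metric X d.
Hypothesis Hspan : forall v, span n e v.
Hypothesis Hiso : forall a b, vdist (f a) (f b) = h (d a b).

Lemma dist_pos_of_vdist_pos a b : 0 < vdist (f a) (f b) -> 0 < d a b.
Proof.
  destruct Hd as [Hd0 _]; intro Hv; rewrite Hiso in Hv.
  destruct (Hd0 a b) as [|E]; auto; rewrite <- E in Hv; destruct Hh as [_ [H0 _]]; lra.
Qed.

Lemma embedding_inj a b : f a = f b -> a = b.
Proof.
  intro E; destruct Hd as [Hd0 [Hdeq _]]; apply Hdeq.
  destruct (Hd0 a b) as [Hpos|]; auto.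
  pose proof (snowflaking_pos h Hh _ Hpos); rewrite <- Hiso, E, vdist_diag in H; lra.
Qed.

Variable x : nat -> X.
Hypothesis Hx : forall m m', x m = x m' -> m = m'.

Lemma unbounded_image_absurd :
  ~ (exists B, forall m, vdist (f (x m)) (f (x O)) <= B) -> False.
Proof.
  intro Hunb; set (r m := vdist (f (x m)) (f (x O))).
  assert (Hfar : forall k, exists m, INR k < r m).
  { intro k; apply NNPP; intro Hno; apply Hunb; exists (INR k); intro m.
    apply Rnot_lt_le; intro; apply Hno; eauto. }
  destruct (choice _ Hfar) as [psi Hpsi].
  destruct (exists_aligned_subseq n e Hspan (fun k => f (x (psi k))) (f (x O)))
    as [phi [Hphi Hal]].
  set (i := psi (phi O)); set (t := d (x i) (x O)).
  assert (Hri : 0 < r i)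
    by (pose proof (Hpsi (phi O)); pose proof (pos_INR (phi O)); unfold i; lra).
  assert (Ht : 0 < t) by now apply dist_pos_of_vdist_pos.
  assert (Hht : 0 < h t) by now apply snowflaking_pos.
  destruct (snowflaking_flat_at_infty h Hh (h t / (2 * t))) as [eta [Heta0 Heta]].
  { apply Rdiv_lt_0_compat; lra. }
  destruct (INR_archimed 1 (r i + eta) ltac:(lra)) as [M HM]; rewrite Rmult_1_r in HM.
  set (j := psi (phi M)); set (s := d (x j) (x i)).
  assert (Hrj : r i + eta < r j).
  { pose proof (Hpsi (phi M)); pose proof (le_INR _ _ (strict_incr_ge phi Hphi M)).
    unfold j; lra. }
  assert (Hgap : h s + r i / 2 <= r j).
  { unfold s; rewrite <- Hiso; apply (Hal M O); change (r i <= r j); lra. }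
  assert (Hhs : eta < h s).
  { pose proof (vdist_ge_diff (f (x j)) (f (x i)) (f (x O))) as Hge; fold (r i) (r j) in Hge.
    unfold s; rewrite <- Hiso; lra. }
  assert (Hs : 0 < s) by (apply dist_pos_of_vdist_pos; rewrite Hiso; fold s; lra).
  assert (Hrit : r i = h t) by apply Hiso.
  assert (Hrj0 : r j = h (d (x j) (x O))) by apply Hiso.
  pose proof (snowflake_excess_bound h Hh X d (x j) (x i) (x O) (1 / 2) Hd Hs
                ltac:(fold s t; lra)) as Hexc; fold s t in Hexc.
  specialize (Heta s Hs Hhs).
  assert (t * h s < t * (h t / (2 * t) * s)) by (apply Rmult_lt_compat_l; lra).
  replace (t * (h t / (2 * t) * s)) with (1 / 2 * h t * s) in H by (field; lra).
  lra.
Qed.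

Lemma bounded_image_aligned_subseq :
  (exists B, forall m, vdist (f (x m)) (f (x O)) <= B) ->
  exists psi p, strict_incr psi /\ conv (fun k => f (x (psi k))) p /\
    (forall k, f (x (psi k)) <> p) /\ aligned p (fun k => f (x (psi k))).
Proof.
  intros [B HB].
  destruct (span_boundedly_compact n e (fun m => f (x m))) as [phi [p [Hphi [_ Hconv]]]].
  { intro; apply Hspan. }
  { exists (B + ns_norm (f (x O))); intro m; pose proof (norm_le_vdist (f (x m)) (f (x O))).
    pose proof (HB m); lra. }
  destruct (injective_seq_avoids (fun k => f (x (phi k))) p) as [N HN].
  { intros k k' E; now apply (strict_incr_inj phi Hphi), Hx, embedding_inj. }
  destruct (exists_aligned_subseq n e Hspan (fun k => f (x (phi (N + k)%nat))) p)
    as [phi' [Hphi' Hal]].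
  exists (fun k => phi (N + phi' k)%nat), p; split; [|split; [|split]].
  - apply (strict_incr_comp (fun k => phi (N + k)%nat)); auto using strict_incr_shift.
  - apply (conv_subseq (fun k => f (x (phi k)))); auto.
    apply (strict_incr_comp (fun k => (N + k)%nat)); auto; intro k; lia.
  - intro k; apply HN; lia.
  - exact Hal.
Qed.

Lemma bounded_image_absurd :
  (exists B, forall m, vdist (f (x m)) (f (x O)) <= B) -> False.
Proof.
  intro Hb; destruct (bounded_image_aligned_subseq Hb) as [psi [p [Hpsi [Hconv [Hne Hal]]]]].
  set (z k := x (psi k)); set (r k := vdist (f (z k)) p).
  assert (Hr : forall k, 0 < r k) by (intro k; apply vdist_gt0, Hne).
  assert (Hsmall : forall eps, 0 < eps -> exists k, r k < eps)
    by (intros eps He; destruct (Hconv eps He) as [N HN]; exists N; apply HN; lia).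
  pose proof (Hr O) as Hr0.
  assert (Hdist : forall j k, vdist (f (z j)) (f (z k)) <= r j + r k).
  { intros j k; pose proof (vdist_triangle (f (z j)) p (f (z k))) as H.
    now rewrite (vdist_sym p) in H. }
  (* h need not tend to 0 at 0+, so a small value of h is read off two points near p *)
  assert (Hsmall_h : exists t0, 0 < t0 /\ h t0 < r O / 2).
  { destruct (Hsmall (r O / 4)) as [j Hj]; [lra|].
    destruct (Hsmall (r j) (Hr j)) as [k Hk].
    exists (d (z j) (z k)); split.
    - apply dist_pos_of_vdist_pos, vdist_gt0; intro E; unfold r in Hk; rewrite E in Hk; lra.
    - rewrite <- Hiso; pose proof (Hdist j k); pose proof (Hr k); lra. }
  destruct Hsmall_h as [t0 [Ht0 Hht0]].
  set (K := h t0 / t0).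
  destruct (snowflaking_steep_near0 h Hh (5 * K + 1)) as [eta [Heta Hsteep]].
  destruct (Hsmall (Rmin (r O / 2) (eta / 2))) as [j Hj].
  { apply Rmin_glb_lt; [apply Rdiv_lt_0_compat; [apply Hr|]|]; lra. }
  assert (Hj' : r j < r O / 2 /\ r j < eta / 2)
    by (split; eapply Rlt_le_trans; eauto; [apply Rmin_l|apply Rmin_r]).
  destruct (Hsmall (r j / 4)) as [k Hk]; [pose proof (Hr j); lra|].
  set (s := d (z O) (z j)); set (t := d (z j) (z k)).
  assert (Hgap : h s + r j / 2 <= r O).
  { unfold s; rewrite <- Hiso; apply (Hal O j); change (r j <= r O); lra. }
  assert (Hhs : r O / 2 < h s).
  { pose proof (vdist_ge_diff (f (z O)) (f (z j)) p); fold (r O) (r j) in *.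
    unfold s; rewrite <- Hiso; lra. }
  assert (Hht : h t <= r j + r k) by (unfold t; rewrite <- Hiso; apply Hdist).
  assert (Hhik : r O - r k <= h (d (z O) (z k)))
    by (rewrite <- Hiso; apply (vdist_ge_diff (f (z O)) (f (z k)) p)).
  assert (Ht : 0 < t).
  { apply dist_pos_of_vdist_pos, vdist_gt0; intro E.
    assert (r j = r k) by (unfold r; now rewrite E); pose proof (Hr j); lra. }
  assert (Hts : t0 < s) by (apply (snowflaking_lt_inv h Hh); [apply Hd | lra]).
  assert (HsK : h s <= K * s).
  { pose proof (snowflaking_ratio h Hh t0 s Ht0 ltac:(lra)).
    unfold K; apply (Rmult_le_reg_l t0); [lra|]; field_simplify; lra. }
  pose proof (Hsteep t Ht ltac:(lra)) as Hst.
  pose proof (snowflake_excess_bound h Hh X d (z O) (z j) (z k) (1 / 5) Hd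
                ltac:(fold s; lra) ltac:(fold s t; lra)) as Hexc; fold s t in Hexc.
  nra.
Qed.

End SnowflakeEmbedding.

Theorem theorem1p2 (h : R -> R) (X : Type) (d : X -> X -> R) :
  snowflaking h ->
  is_metric X d ->
  (exists (V : NormedSpace) (f : X -> V),
      finite_dimensional V /\ isometric_embedding X (fun x y => h (d x y)) V f) ->
  finite_type X.
Proof.
  intros Hh Hd [V [f [[n [e Hspan]] Hiso]]].
  apply NNPP; intro Hinf; destruct (infinite_injective_seq X Hinf) as [x Hx].
  destruct (classic (exists B, forall m, vdist (f (x m)) (f (x O)) <= B)) as [Hb|Hunb].
  - exact (bounded_image_absurd h X d V f n e Hh Hd Hspan Hiso x Hx Hb).
  - exact (unbounded_image_absurd h X d V f n e Hh Hd Hspan Hiso x Hunb).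
Qed.
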